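(* Assume the total harvested energy is finite, so that problem (P) below has an optimal solution. Then there exists an optimal solution $\{p_{k,i},\delta_{k,i}\}$ of (P) that is a procrastinating policy, i.e. it satisfies $$p_{k,i}-\alpha_j\delta_{j,i}\ge 0\quad\text{for all } j,k\in\{1,2\},\ j\neq k,\ i=1,\dots,N.$$
   Context: Two-way channel setting. There are two nodes $T_1,T_2$ and $N$ time slots of unit length. The fixed parameters are channel power gains $h_1,h_2>0$, noise powers $\sigma_1^2,\sigma_2^2>0$, energy transfer efficiencies $\alpha_1,\alpha_2\in[0,1]$, and harvested energies $E_{k,i}\ge 0$ ($k=1,2$, $i=1,\dots,N$). A power policy is a collection $\{p_{k,i},\delta_{k,i}\}_{k=1,2;\,i=1,\dots,N}$. Here $p_{k,i}$ is the transmit power (energy) of $T_k$ in slot $i$, and $\delta_{k,i}$ is the energy sent by $T_k$ to the other node $T_j$ ($j\neq k$) in slot $i$, of which $T_j$ receives $\alpha_k\delta_{k,i}$. With infinite batteries the battery state is $$S_{k,i}=\sum_{n=1}^{i}\big(E_{k,n}-p_{k,n}+\alpha_j\delta_{j,n}-\delta_{k,n}\big),\qquad j\neq k.$$ Let $$C(p_1,p_2)=\tfrac12\log\!\Big(1+\tfrac{h_1p_1}{\sigma_2^2}\Big)+\tfrac12\log\!\Big(1+\tfrac{h_2p_2}{\sigma_1^2}\Big).$$ Problem (P) is to maximize $\sum_{i=1}^N C(p_{1,i},p_{2,i})$ over all power policies, subject to $S_{k,i}\ge 0$, $p_{k,i}\ge0$ and $\delta_{k,i}\ge 0$ for all $k=1,2$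 and $i=1,\dots,N$. *)

From Stdlib Require Import Reals.
Open Scope R_scope.

Inductive node : Set := T1 | T2.

Definition other (k : node) : node := match k with T1 => T2 | T2 => T1 end.

Fixpoint sumR (f : nat -> R) (n : nat) : R :=
  match n with
  | O => 0
  | S m => sumR f m + f (S m)
  end.

(* A power policy: p k i = p_{k,i}, d k i = delta_{k,i} (only i = 1..N matter). *)
Record policy : Type := mkPolicy {
  p : node -> nat -> R;
  d : node -> nat -> R }.

(* battery state S_{k,i} (infinite batteries) *)
Definition battery (alpha : node -> R) (E : node -> nat -> R)
  (P : policy) (k : node) (i : nat) : R :=
  sumR (fun n => E k n - p P k n + alpha (other k) * d P (other k) n - d P k n) i.

(* C(p1,p2) = 1/2 log(1 + h1 p1 / sigma2^2) + 1/2 log(1 + h2 p2 / sigma1^2);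
   sigma2 k denotes the noise power sigma_k^2 of node k. *)
Definition Crate (h sigma2 : node -> R) (p1 p2 : R) : R :=
  / 2 * ln (1 + h T1 * p1 / sigma2 T2) + / 2 * ln (1 + h T2 * p2 / sigma2 T1).

Definition objective (h sigma2 : node -> R) (N : nat) (P : policy) : R :=
  sumR (fun i => Crate h sigma2 (p P T1 i) (p P T2 i)) N.

Definition feasible (alpha : node -> R) (E : node -> nat -> R) (N : nat)
  (P : policy) : Prop :=
  forall k i, (1 <= i <= N)%nat ->
    0 <= battery alpha E P k i /\ 0 <= p P k i /\ 0 <= d P k i.

Definition optimal (h sigma2 alpha : node -> R) (E : node -> nat -> R)
  (N : nat) (P : policy) : Prop :=
  feasible alpha E N P /\
  forall Q, feasible alpha E N Q -> objective h sigma2 N Q <= objective h sigma2 N P.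

Definition procrastinating (alpha : node -> R) (N : nat) (P : policy) : Prop :=
  forall k i, (1 <= i <= N)%nat -> 0 <= p P k i - alpha (other k) * d P (other k) i.

(* Keep the powers of an optimal policy (so the objective is unchanged) and
   replace its transfers by lazy ones: in each slot a node sends only what is
   needed to cover the other node's deficit after harvesting and transmitting.
   The received energy then never exceeds the receiver's transmit power, which
   is procrastination.  Feasibility follows from the invariant that the battery
   pair of the original policy is reachable from that of the lazy policy by
   further lossy transfers: since the original batteries are nonnegative, at
   most one node can be in deficit, and the other one has enough energy to
   cover it while keeping the invariant. *)

From Stdlib Require Import Reals Lra Lia.
Open Scope R_scope.

Definition after_transfer (a c x : node -> R) (k : node) : R :=
  c k + a (other k) * x (other k) - x k.

Definition transfer_dominates (a b B : node -> R) : Prop :=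
  exists x, (forall k, 0 <= x k) /\ forall k, B k <= after_transfer a b x k.

(* Node [k] covers the deficit of [other k] exactly; with [a k = 0] the division
   yields the junk value [0]. *)
Definition deficit_transfer (a c : node -> R) (k : node) : R :=
  if Rlt_dec (c (other k)) 0 then - c (other k) / a k else 0.

Lemma deficit_transfer_ge0 (a c : node -> R) (k : node) :
  0 <= a k -> 0 <= deficit_transfer a c k.
Proof.
  intros Ha; unfold deficit_transfer.
  destruct (Rlt_dec (c (other k)) 0); [|lra].
  apply Rmult_le_pos; [lra|].
  destruct Ha as [Ha|Ha]; [left; apply Rinv_0_lt_compat; exact Ha|].
  rewrite <- Ha, Rinv_0; lra.
Qed.

Lemma received_deficit_transfer_le (a c : node -> R) (k : node) :
  a (other k) * deficit_transfer a c (other k) <= Rmax 0 (- c k).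
Proof.
  assert (Hoo : other (other k) = k) by (destruct k; reflexivity).
  unfold deficit_transfer; rewrite Hoo.
  destruct (Rlt_dec (c k) 0) as [Hc|Hc].
  - rewrite Rmax_right by lra.
    destruct (Req_dec (a (other k)) 0) as [Ha|Ha].
    + rewrite Ha; lra.
    + right; field; exact Ha.
  - rewrite Rmult_0_r; apply Rmax_l.
Qed.

Lemma deficit_cover (a1 a2 c1 c2 x1 x2 : R) :
  0 <= a1 <= 1 -> a2 <= 1 -> 0 <= x1 -> 0 <= x2 ->
  0 <= c1 + a2 * x2 - x1 -> 0 <= c2 + a1 * x1 - x2 -> c1 < 0 ->
  let t := - c1 / a2 in a2 * t = - c1 /\ 0 <= t /\ a1 * x1 <= x2 - t.
Proof.
  intros Ha1 Ha2 Hx1 Hx2 H1 H2 Hc1 t.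
  assert (Ha2pos : 0 < a2).
  { destruct (Rle_or_lt a2 0) as [Hle|Hlt]; [|exact Hlt].
    assert (a2 * x2 <= 0) by nra; lra. }
  assert (Ht : a2 * t = - c1) by (unfold t; field; lra).
  assert (Ht0 : 0 <= t) by nra.
  split; [exact Ht|]; split; [exact Ht0|].
  assert (Hrest : x1 <= a2 * (x2 - t)) by nra.
  assert (Hrest0 : 0 <= x2 - t).
  { destruct (Rle_or_lt 0 (x2 - t)) as [Hle|Hlt]; [exact Hle|].
    assert (a2 * (x2 - t) < 0) by nra; lra. }
  assert (a2 * (x2 - t) <= x2 - t) by nra.
  assert (a1 * x1 <= x1) by nra.
  lra.
Qed.

Lemma deficit_transfer_dominates (a c B : node -> R) :
  (forall k, 0 <= a k <= 1) -> (forall k, 0 <= B k) -> transfer_dominates a c B ->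
  let c' := after_transfer a c (deficit_transfer a c) in
  (forall k, 0 <= c' k) /\ transfer_dominates a c' B.
Proof.
  intros Ha HB [x [Hx Hdom]] c'.
  unfold c', transfer_dominates, after_transfer in *.
  pose proof (Ha T1) as Ha1; pose proof (Ha T2) as Ha2.
  pose proof (Hx T1) as Hx1; pose proof (Hx T2) as Hx2.
  assert (H1 : 0 <= c T1 + a T2 * x T2 - x T1)
    by (pose proof (Hdom T1); pose proof (HB T1); simpl in *; lra).
  assert (H2 : 0 <= c T2 + a T1 * x T1 - x T2)
    by (pose proof (Hdom T2); pose proof (HB T2); simpl in *; lra).
  set (g := deficit_transfer a c).
  assert (Hg1 : g T1 = if Rlt_dec (c T2) 0 then - c T2 / a T1 else 0) by reflexivity.
  assert (Hg2 : g T2 = if Rlt_dec (c T1) 0 then - c T1 / a T2 else 0) by reflexivity.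
  destruct (Rlt_dec (c T1) 0) as [Hc1|Hc1]; destruct (Rlt_dec (c T2) 0) as [Hc2|Hc2].
  - destruct (deficit_cover (a T1) (a T2) (c T1) (c T2) (x T1) (x T2)) as [_ [Ht0 Hle]];
      lra.
  - destruct (deficit_cover (a T1) (a T2) (c T1) (c T2) (x T1) (x T2)) as [Ht [Ht0 Hle]];
      try lra.
    split.
    + intros []; simpl; rewrite ?Hg1, ?Hg2; lra.
    + exists (fun k => match k with T1 => x T1 | T2 => x T2 - - c T1 / a T2 end).
      split; intros k; pose proof (Hdom k); destruct k; simpl in *; rewrite ?Hg1, ?Hg2 in *; nra.
  - destruct (deficit_cover (a T2) (a T1) (c T2) (c T1) (x T2) (x T1)) as [Ht [Ht0 Hle]];
      try lra.
    split.
    + intros []; simpl; rewrite ?Hg1, ?Hg2; lra.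
    + exists (fun k => match k with T1 => x T1 - - c T2 / a T1 | T2 => x T2 end).
      split; intros k; pose proof (Hdom k); destruct k; simpl in *; rewrite ?Hg1, ?Hg2 in *; nra.
  - split.
    + intros []; simpl; rewrite ?Hg1, ?Hg2; lra.
    + exists x; split; [exact Hx|].
      intros k; pose proof (Hdom k); destruct k; simpl in *; rewrite ?Hg1, ?Hg2 in *; lra.
Qed.

Lemma transfer_dominates_shift (a b B u y b' B' : node -> R) :
  (forall k, 0 <= y k) -> (forall k, b' k = b k + u k) ->
  (forall k, B' k = after_transfer a (fun k => B k + u k) y k) ->
  transfer_dominates a b B -> transfer_dominates a b' B'.
Proof.
  intros Hy Hb' HB' [x [Hx Hdom]].
  exists (fun k => x k + y k); split.
  - intros k; specialize (Hx k); specialize (Hy k); lra.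
  - intros k; specialize (Hdom k); unfold after_transfer in *.
    rewrite Hb', HB', Rmult_plus_distr_l; lra.
Qed.

Fixpoint lazy_battery (a : node -> R) (E q : node -> nat -> R) (i : nat) : node -> R :=
  match i with
  | O => fun _ => 0
  | S m =>
      let c k := lazy_battery a E q m k + E k (S m) - q k (S m) in
      after_transfer a c (deficit_transfer a c)
  end.

Definition lazy_balance (a : node -> R) (E q : node -> nat -> R) (m : nat) (k : node) : R :=
  lazy_battery a E q m k + E k (S m) - q k (S m).

Definition lazy_policy (a : node -> R) (E q : node -> nat -> R) : policy :=
  mkPolicy q (fun k i => match i with
                         | O => 0
                         | S m => deficit_transfer a (lazy_balance a E q m) k
                         end).

Lemma lazy_battery_S (a : node -> R) (E q : node -> nat -> R) (m : nat) :
  lazy_battery a E q (S m) =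
  after_transfer a (lazy_balance a E q m) (deficit_transfer a (lazy_balance a E q m)).
Proof. reflexivity. Qed.

Lemma battery_lazy_policy (a : node -> R) (E q : node -> nat -> R) (k : node) (i : nat) :
  battery a E (lazy_policy a E q) k i = lazy_battery a E q i k.
Proof.
  revert k; induction i as [|m IH]; intros k; [reflexivity|].
  unfold battery in *; simpl sumR; rewrite IH, lazy_battery_S.
  unfold after_transfer, lazy_balance; simpl; ring.
Qed.

Lemma lazy_battery_dominates (a : node -> R) (E : node -> nat -> R) (N : nat) (P : policy) :
  (forall k, 0 <= a k <= 1) -> feasible a E N P ->
  forall i, (i <= N)%nat ->
  (forall k, 0 <= lazy_battery a E (p P) i k) /\
  transfer_dominates a (lazy_battery a E (p P) i) (fun k => battery a E P k i).
Proof.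
  intros Ha HP; induction i as [|m IH]; intros Hi.
  - split; [intros k; simpl; lra|].
    exists (fun _ => 0); split; intros k; unfold after_transfer, battery; simpl; lra.
  - destruct IH as [_ Hdom]; [lia|].
    assert (Hslot : transfer_dominates a (lazy_balance a E (p P) m)
                                         (fun k => battery a E P k (S m))).
    { apply (transfer_dominates_shift a (lazy_battery a E (p P) m)
               (fun k => battery a E P k m) (fun k => E k (S m) - p P k (S m))
               (fun k => d P k (S m))).
      - intros k; apply (HP k (S m)); lia.
      - intros k; unfold lazy_balance; ring.
      - intros k; unfold battery, after_transfer; simpl sumR; ring.
      - exact Hdom. }
    rewrite lazy_battery_S.
    apply deficit_transfer_dominates; [exact Ha| |exact Hslot].
    intros k; apply (HP k (S m)); lia.
Qed.

Lemma lazy_policy_feasible (a : node -> R) (E : node -> nat -> R) (N : nat) (P : policy) :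
  (forall k, 0 <= a k <= 1) -> feasible a E N P ->
  feasible a E N (lazy_policy a E (p P)).
Proof.
  intros Ha HP k i Hi.
  rewrite battery_lazy_policy.
  split; [apply (lazy_battery_dominates a E N P Ha HP); lia|].
  split; [apply (HP k i Hi)|].
  destruct i as [|m]; [lia|]; apply deficit_transfer_ge0, Ha.
Qed.

Lemma lazy_policy_procrastinating (a : node -> R) (E : node -> nat -> R) (N : nat)
  (P : policy) :
  (forall k, 0 <= a k <= 1) -> (forall k i, 0 <= E k i) -> feasible a E N P ->
  procrastinating a N (lazy_policy a E (p P)).
Proof.
  intros Ha HE HP k i Hi.
  destruct i as [|m]; [lia|]; simpl.
  pose proof (received_deficit_transfer_le a (lazy_balance a E (p P) m) k) as Hrec.
  assert (Hq : Rmax 0 (- lazy_balance a E (p P) m k) <= p P k (S m)).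
  { destruct (lazy_battery_dominates a E N P Ha HP m) as [Hb _]; [lia|].
    apply Rmax_lub; [apply (HP k (S m) Hi)|].
    specialize (Hb k); specialize (HE k (S m)); unfold lazy_balance; lra. }
  lra.
Qed.

Theorem lemma1 (N : nat) (h sigma2 alpha : node -> R) (E : node -> nat -> R)
  (Hh : forall k, 0 < h k)
  (Hs : forall k, 0 < sigma2 k)
  (Ha : forall k, 0 <= alpha k <= 1)
  (HE : forall k i, 0 <= E k i)
  (Hopt : exists P, optimal h sigma2 alpha E N P) :
  exists P, optimal h sigma2 alpha E N P /\ procrastinating alpha N P.
Proof.
  destruct Hopt as [P [HP Hbest]].
  exists (lazy_policy alpha E (p P)); split; [split|].
  - exact (lazy_policy_feasible alpha E N P Ha HP).
  - exact Hbest.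
  - exact (lazy_policy_procrastinating alpha E N P Ha HE HP).
Qed.
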